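(* $D(19,\{3,4\})\ge 34$; equivalently, every $\{K_3,K_4\}$-decomposition of $K_{19}$ has $\alpha\ge 11$.
   Context: A $\{K_3,K_4\}$-decomposition of $K_v$ is a collection of subgraphs, each isomorphic to $K_3$ or $K_4$, such that every edge of $K_v$ lies in exactly one of them. $\alpha$ and $\beta$ denote the numbers of copies of $K_3$ and $K_4$ in the decomposition (so $3\alpha+6\beta=\binom{v}{2}$). $D(v,\{3,4\})$ is the minimum of $\alpha+\beta$ over all such decompositions of $K_v$. *)

From mathcomp Require Import all_boot.
Set Implicit Arguments. Unset Strict Implicit. Unset Printing Implicit Defensive.

(* A {K3,K4}-decomposition is
   represented by the set B of vertex sets of its blocks: each block is a
   set of 3 or 4 vertices (the copy of K_3 / K_4 on those vertices), and
   every edge {x,y} (x <> y) of K_v lies in exactly one block. *)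
Definition K34_decomposition (v : nat) (B : {set {set 'I_v}}) : Prop :=
  (forall b, b \in B -> #|b| = 3 \/ #|b| = 4) /\
  (forall x y : 'I_v, x != y ->
     #|[set b in B | (x \in b) && (y \in b)]| = 1).

Definition num_K3 (v : nat) (B : {set {set 'I_v}}) : nat :=
  #|[set b in B | #|b| == 3]|.
Definition num_K4 (v : nat) (B : {set {set 'I_v}}) : nat :=
  #|[set b in B | #|b| == 4]|.

From mathcomp Require Import all_boot zify.

Set Implicit Arguments. Unset Strict Implicit. Unset Printing Implicit Defensive.

(* Every vertex lies on 18 = 2 t + 3 f edges, where t and f count the
   triangles and the K4's through it; so t is a multiple of 3, and
   alpha + 2 beta = 57 makes alpha odd, hence positive.  Let N be the set of
   the m vertices lying on some triangle.  Each x in N has t(x) >= 3, so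
   m <= alpha, and the triangles through x cover 2 t(x) <= m - 1 pairs of N,
   so m >= 7.  Count the ordered pairs of N (triangles cover 6 alpha of them,
   a K4 b covers k (k - 1) with k = |b :&: N|) and the incidences between N
   and the K4's (sum 2 t + 3 f = 18 over N); with 2 k <= 2 + k (k - 1) this
   gives 3 alpha <= m^2 - 13 m + 57.  Since m <= alpha, m^2 - 16 m + 57 >= 0,
   hence m >= 11, so alpha >= 11 and alpha + beta = (57 + alpha) / 2 >= 34. *)

Lemma cardsD1_in (T : finType) (A : {set T}) x : x \in A -> #|A :\ x| = #|A|.-1.
Proof. by move=> xA; rewrite (cardsD1 x A) xA. Qed.

Lemma sum_cardsD1 (T : finType) (A : {set T}) :
  \sum_(x in A) #|A :\ x| = #|A| * #|A|.-1.
Proof. by rewrite -sum_nat_const; apply: eq_bigr => x; apply: cardsD1_in. Qed.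

Section Incidence.
Variables (T : finType) (B : {set {set T}}).

Lemma sum_card_setI_blocks (P : pred {set T}) (S : {set T}) :
  \sum_(b in B | P b) #|b :&: S| =
  \sum_(y in S) #|[set b in B | (y \in b) && P b]|.
Proof.
transitivity (\sum_(b in B | P b) \sum_(y in S | y \in b) 1).
  apply: eq_bigr => b _; rewrite sum1dep_card.
  by apply: eq_card => y; rewrite !inE andbC.
rewrite (exchange_big_dep (fun y => y \in S)) => [|b y _ /andP[] //].
apply: eq_bigr => y yS; rewrite sum1dep_card.
by apply: eq_card => b; rewrite !inE yS andbAC -andbA.
Qed.

Hypothesis B_pair : forall x y : T, x != y ->
  #|[set b in B | (x \in b) && (y \in b)]| = 1.

Lemma pair_count_at (S : {set T}) z :
  \sum_(b in B | z \in b) #|b :&: S :\ z| = #|S :\ z|.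
Proof.
under eq_bigr do rewrite -setIDA.
rewrite sum_card_setI_blocks -sum1_card; apply: eq_bigr => y.
by rewrite !inE => /andP[yz _]; apply: B_pair.
Qed.

Lemma pair_count (S : {set T}) :
  \sum_(b in B) #|b :&: S| * #|b :&: S|.-1 = #|S| * #|S|.-1.
Proof.
rewrite -sum_cardsD1.
transitivity (\sum_(b in B) \sum_(x in S | x \in b) #|b :&: S :\ x|).
  apply: eq_bigr => b _; rewrite -sum_cardsD1.
  by apply: eq_bigl => x; rewrite !inE andbC.
rewrite (exchange_big_dep (fun x => x \in S)) => [|b x _ /andP[] //].
apply: eq_bigr => x xS; rewrite -pair_count_at.
by apply: eq_bigl => b; rewrite xS.
Qed.

End Incidence.

Section Decomposition.
Variables (v : nat) (B : {set {set 'I_v}}).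

Definition num_K3_at (x : 'I_v) : nat :=
  #|[set b in B | (x \in b) && (#|b| == 3)]|.
Definition num_K4_at (x : 'I_v) : nat :=
  #|[set b in B | (x \in b) && (#|b| == 4)]|.
Definition K3_support : {set 'I_v} := \bigcup_(b in B | #|b| == 3) b.

Local Notation N := K3_support.

Lemma K3_sub_support b : b \in B -> #|b| = 3 -> b \subset N.
Proof. by move=> bB b3; apply: bigcup_sup; rewrite bB b3 /=. Qed.

Lemma mem_K3_support x : (x \in N) = (0 < num_K3_at x).
Proof.
rewrite card_gt0; apply/bigcupP/set0Pn => [[b /andP[bB b3] xb] | [b]].
  by exists b; rewrite !inE bB xb b3.
by rewrite !inE => /and3P[bB xb b3]; exists b; rewrite ?bB ?b3.
Qed.

Lemma K3_support_ge3 : 0 < num_K3 B -> 3 <= #|N|.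
Proof.
rewrite card_gt0 => /set0Pn[b]; rewrite inE => /andP[bB /eqP b3].
by rewrite -b3 subset_leq_card // K3_sub_support.
Qed.

Lemma sum_num_K3_at_support : \sum_(x in N) num_K3_at x = 3 * num_K3 B.
Proof.
rewrite -(sum_card_setI_blocks B (fun b => #|b| == 3)).
under eq_bigr => b /andP[bB /eqP b3] do rewrite (setIidPl (K3_sub_support bB b3)) b3.
by rewrite sum_nat_cond_const mulnC.
Qed.

Lemma sum_num_K4_at_support :
  \sum_(x in N) num_K4_at x = \sum_(b in B | #|b| == 4) #|b :&: N|.
Proof. by rewrite sum_card_setI_blocks. Qed.

Hypothesis B_size : forall b, b \in B -> #|b| = 3 \/ #|b| = 4.

Lemma sum_blocks_by_size (P : pred {set 'I_v}) (F : {set 'I_v} -> nat) :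
  {subset P <= B} ->
  \sum_(b | P b) F b =
  \sum_(b | P b && (#|b| == 3)) F b + \sum_(b | P b && (#|b| == 4)) F b.
Proof.
move=> PB; rewrite [LHS](bigID [pred b : {set 'I_v} | #|b| == 3]) /=.
congr (_ + _); apply: eq_bigl => b; case Pb: (P b) => //=.
by case: (B_size (PB _ Pb)) => ->.
Qed.

Lemma sum_blocks_through_by_size x (F : {set 'I_v} -> nat) :
  \sum_(b in B | x \in b) F b =
  \sum_(b in B | (x \in b) && (#|b| == 3)) F b +
  \sum_(b in B | (x \in b) && (#|b| == 4)) F b.
Proof.
rewrite sum_blocks_by_size => [|b /andP[] //].
by congr (_ + _); apply: eq_bigl => b; rewrite andbA.
Qed.

Hypothesis B_pair : forall x y : 'I_v, x != y ->
  #|[set b in B | (x \in b) && (y \in b)]| = 1.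

Lemma num_K3_K4 : 6 * num_K3 B + 12 * num_K4 B = v * v.-1.
Proof.
have := pair_count B_pair [set: 'I_v]; rewrite cardsT card_ord => <-.
rewrite sum_blocks_by_size //.
under eq_bigr => b /andP[_ /eqP b3] do rewrite setIT b3.
under [X in _ = _ + X]eq_bigr => b /andP[_ /eqP b4] do rewrite setIT b4.
by rewrite !sum_nat_cond_const !(mulnC #|_|).
Qed.

Lemma degree_at x : 2 * num_K3_at x + 3 * num_K4_at x = v.-1.
Proof.
have vx : #|[set: 'I_v] :\ x| = v.-1.
  by rewrite -[in RHS](card_ord v) -cardsT (cardsD1 x) in_setT.
rewrite -vx -(pair_count_at B_pair) sum_blocks_through_by_size.
under eq_bigr => b /andP[_ /andP[xb /eqP b3]] do rewrite setIT (cardsD1_in xb) b3.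
under [X in _ = _ + X]eq_bigr => b /andP[_ /andP[xb /eqP b4]] do
  rewrite setIT (cardsD1_in xb) b4.
by rewrite !sum_nat_cond_const !(mulnC #|_|).
Qed.

Lemma pair_count_support :
  6 * num_K3 B + \sum_(b in B | #|b| == 4) #|b :&: N| * #|b :&: N|.-1 =
  #|N| * #|N|.-1.
Proof.
rewrite -(pair_count B_pair) [RHS]sum_blocks_by_size //.
under [X in _ = X + _]eq_bigr => b /andP[bB /eqP b3] do
  rewrite (setIidPl (K3_sub_support bB b3)) b3.
by rewrite sum_nat_cond_const mulnC.
Qed.

Lemma num_K3_at_support_le x : x \in N -> 2 * num_K3_at x <= #|N|.-1.
Proof.
move=> xN; rewrite -(cardsD1_in xN) -(pair_count_at B_pair).
rewrite sum_blocks_through_by_size; apply: leq_trans (leq_addr _ _).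
under eq_bigr => b /andP[bB /andP[xb /eqP b3]] do
  rewrite (setIidPl (K3_sub_support bB b3)) (cardsD1_in xb) b3.
by rewrite sum_nat_cond_const mulnC.
Qed.

Lemma K3_support_inequality :
  2 * v.-1 * #|N| + 6 * num_K3 B <= 6 * num_K4 B + 3 * (#|N| * #|N|.-1).
Proof.
set I := \sum_(b in B | #|b| == 4) #|b :&: N|.
set J := \sum_(b in B | #|b| == 4) #|b :&: N| * #|b :&: N|.-1.
have incidences : 6 * num_K3 B + 3 * I = #|N| * v.-1.
  rewrite -sum_nat_const -(eq_bigr _ (fun x _ => degree_at x)) big_split /=.
  by rewrite -!big_distrr /= sum_num_K3_at_support sum_num_K4_at_support mulnA.
have K4_pairs : 2 * I <= 2 * num_K4 B + J.
  rewrite [2 * num_K4 B]mulnC /num_K4 -sum_nat_cond_const /I /J.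
  rewrite big_distrr -big_split /=.
  by apply: leq_sum => b _; case: #|_| => [|[|k]] //; nia.
by have := pair_count_support; rewrite -/J; nia.
Qed.

End Decomposition.

Section Order19.
Variable B : {set {set 'I_19}}.
Hypothesis B_size : forall b, b \in B -> #|b| = 3 \/ #|b| = 4.
Hypothesis B_pair : forall x y : 'I_19, x != y ->
  #|[set b in B | (x \in b) && (y \in b)]| = 1.

Local Notation N := (K3_support B).

Lemma num_K3_K4_19 : num_K3 B + 2 * num_K4 B = 57.
Proof. by have := num_K3_K4 B_size B_pair; lia. Qed.

Lemma num_K3_at_19 x : x \in N -> 3 <= num_K3_at B x.
Proof. by rewrite mem_K3_support; have := degree_at B_size B_pair x; lia. Qed.

Lemma K3_support_le_num_K3 : #|N| <= num_K3 B.
Proof.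
rewrite -(leq_pmul2l (_ : 0 < 3)) // -sum_num_K3_at_support mulnC.
by rewrite -sum_nat_const; apply: leq_sum => x; apply: num_K3_at_19.
Qed.

Lemma K3_support_ge7 : 7 <= #|N|.
Proof.
have : 0 < #|N|.
  by apply: leq_trans (K3_support_ge3 _); have := num_K3_K4_19; lia.
rewrite card_gt0 => /set0Pn[x xN].
have := num_K3_at_support_le B_size B_pair xN; have := num_K3_at_19 xN; lia.
Qed.

Lemma num_K3_ge11 : 11 <= num_K3 B.
Proof.
have := K3_support_inequality B_size B_pair.
have := num_K3_K4_19; have := K3_support_le_num_K3; have := K3_support_ge7.
nia.
Qed.

End Order19.

Theorem mainTheorem20 (B : {set {set 'I_19}}) :
  K34_decomposition B ->
  34 <= num_K3 B + num_K4 B /\ 11 <= num_K3 B.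
Proof.
move=> [B_size B_pair].
have := num_K3_K4_19 B_size B_pair; have := num_K3_ge11 B_size B_pair; lia.
Qed.
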